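(* Let $R$ be a ring, $\mathcal{X}$ a class of left $R$-modules and $\mathcal{Y}$ a class of right $R$-modules, and assume $\mathcal{GF}_{(\mathcal{X},\mathcal{Y})}(R)$ is closed under extensions. Then a left $R$-module $M$ has a $\mathcal{Y}\otimes_R-$ exact $\mathcal{X}$-coresolution if and only if it has a $\mathcal{Y}\otimes_R-$ exact $\mathcal{GF}_{(\mathcal{X},\mathcal{Y})}(R)$-coresolution.
   Context: An exact sequence $\mathbb{E}$ of left modules is $\mathcal{Y}\otimes_R-$ exact if $Y\otimes_R\mathbb{E}$ is exact for all $Y\in\mathcal{Y}$. For a class $\mathcal{A}$, an $\mathcal{A}$-coresolution of $M$ is an exact sequence $0\to M\to A^0\to A^1\to\cdots$ with all $A^i\in\mathcal{A}$. $M$ is Gorenstein $(\mathcal{X},\mathcal{Y})$-flat if there is a $\mathcal{Y}\otimes_R-$ exact exact sequence $\cdots\to X_1\to X_0\to X^0\to X^1\to\cdots$ in $\mathcal{X}$ with $M\cong\ker(X^0\to X^1)$; $\mathcal{GF}_{(\mathcal{X},\mathcal{Y})}(R)$ is the class of these. *)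

From HB Require Import structures.
From mathcomp Require Import all_boot all_order all_algebra.
Set Implicit Arguments. Unset Strict Implicit. Unset Printing Implicit Defensive.
Import Order.TTheory GRing.Theory Num.Theory.
Local Open Scope ring_scope.

(* Left R-modules: lmodType R.  Right R-modules: lmodType R^c, with the right
   action  y . r  :=  (r : R^c) *: y. *)

Section Tensor.
Variable R : pzRingType.

(* The tensor product Y (x)_R A is the free abelian group on Y x A modulo the
   subgroup generated by the bilinearity/balancing relations.  Elements of the
   free abelian group are represented by finite formal sums
   s : seq (int * Y * A) (coefficient, y, a), evaluated to their coefficient
   function [fsum s]. *)
Definition fsum (Y : lmodType R^c) (A : lmodType R) (s : seq (int * Y * A))
  : Y -> A -> int :=
  fun y a => \sum_(t <- s | (t.1.2 == y) && (t.2 == a)) t.1.1.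

Definition delta (Y : lmodType R^c) (A : lmodType R) (y0 : Y) (a0 : A)
  : Y -> A -> int :=
  fun y a => if (y == y0) && (a == a0) then 1 else 0.

Inductive relN (Y : lmodType R^c) (A : lmodType R) : (Y -> A -> int) -> Prop :=
| relN0 : relN (fun _ _ => 0)
| relNadd f g : relN f -> relN g -> relN (fun y a => f y a + g y a)
| relNopp f : relN f -> relN (fun y a => - f y a)
| relNext f g : relN f -> (forall y a, f y a = g y a) -> relN g
| relNaddl (y1 y2 : Y) (a : A) :
    relN (fun y b => delta (y1 + y2) a y b - delta y1 a y b - delta y2 a y b)
| relNaddr (y : Y) (a1 a2 : A) :
    relN (fun z b => delta y (a1 + a2) z b - delta y a1 z b - delta y a2 z b)
| relNbal (y : Y) (r : R) (a : A) :
    relN (fun z b => delta ((r : R^c) *: y) a z b - delta y (r *: a) z b).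

Definition tmap (Y : lmodType R^c) (A B : lmodType R) (f : A -> B)
  (s : seq (int * Y * A)) : seq (int * Y * B) :=
  map (fun t => (t.1.1, t.1.2, f t.2)) s.

Definition tzero (Y : lmodType R^c) (A : lmodType R) (s : seq (int * Y * A)) :=
  relN (fsum s).

Definition teq (Y : lmodType R^c) (A : lmodType R) (s t : seq (int * Y * A)) :=
  relN (fun y a => fsum s y a - fsum t y a).

Definition texact_at (Y : lmodType R^c) (A B C : lmodType R)
  (f : A -> B) (g : B -> C) : Prop :=
  forall s : seq (int * Y * B),
    tzero (tmap g s) <-> exists t : seq (int * Y * A), teq (tmap f t) s.

Definition tinj (Y : lmodType R^c) (A B : lmodType R) (f : A -> B) : Prop :=
  forall s : seq (int * Y * A), tzero (tmap f s) -> tzero s.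

Definition mexact (A B C : lmodType R) (f : A -> B) (g : B -> C) : Prop :=
  forall y : B, g y = 0 <-> exists x : A, f x = y.

Definition Ymexact (Ycl : lmodType R^c -> Prop) (A B C : lmodType R)
  (f : A -> B) (g : B -> C) : Prop :=
  forall Y : lmodType R^c, Ycl Y -> @texact_at Y _ _ _ f g.

Definition Yminj (Ycl : lmodType R^c -> Prop) (A B : lmodType R)
  (f : A -> B) : Prop :=
  forall Y : lmodType R^c, Ycl Y -> @tinj Y _ _ f.

Definition GFlat (Xcl : lmodType R -> Prop) (Ycl : lmodType R^c -> Prop)
  (M : lmodType R) : Prop :=
  exists (C : int -> lmodType R) (d : forall i : int, {linear C i -> C (i + 1)}),
    (forall i, Xcl (C i)) /\
    (forall i, mexact (d i) (d (i + 1))) /\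
    (forall i, Ymexact Ycl (d i) (d (i + 1))) /\
    exists phi : {linear M -> C 0},
      injective phi /\ (forall x : C 0, d 0 x = 0 <-> exists m, phi m = x).

Definition has_Y_exact_coresolution (Ycl : lmodType R^c -> Prop)
  (Acl : lmodType R -> Prop) (M : lmodType R) : Prop :=
  exists (A : nat -> lmodType R) (e : {linear M -> A 0%N})
         (d : forall n : nat, {linear A n -> A n.+1}),
    (forall n, Acl (A n)) /\
    injective e /\ mexact e (d 0%N) /\ (forall n, mexact (d n) (d n.+1)) /\
    Yminj Ycl e /\ Ymexact Ycl e (d 0%N) /\
    (forall n, Ymexact Ycl (d n) (d n.+1)).

Definition closed_under_extensions (P : lmodType R -> Prop) : Prop :=
  forall (A B C : lmodType R) (f : {linear A -> B}) (g : {linear B -> C}),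
    injective f -> (forall c : C, exists b, g b = c) -> mexact f g ->
    P A -> P C -> P B.

End Tensor.

From HB Require Import structures.
From mathcomp Require Import all_boot all_order all_algebra.
From mathcomp Require Import ring.
From Stdlib Require Import ClassicalEpsilon.
From Stdlib Require Import FunctionalExtensionality PropExtensionality.
Import GRing.Theory.
Set Implicit Arguments. Unset Strict Implicit. Unset Printing Implicit Defensive.
Local Open Scope ring_scope.

(* Every module in [Xcl] is Gorenstein flat, through the complete resolution
   ... -> X --id--> X --0--> X --id--> X -> ..., which gives one direction.
   Conversely, let 0 -> L -> G^0 -> G^1 -> ... be a Y(x)-exact coresolution
   by Gorenstein flat modules and embed G^0 into some C^0 in [Xcl] with
   Gorenstein flat cokernel. The pushout P of C^0 <- G^0 -> G^1 is an
   extension of C^0/G^0 by G^1, hence Gorenstein flat, and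
   0 -> C^0/L -> P -> G^2 -> G^3 -> ... is again a Y(x)-exact Gorenstein flat
   coresolution. Iterating gives Y(x)-exact short exact sequences
   0 -> L_n -> C^n -> L_(n+1) -> 0 with C^n in [Xcl] and L_0 = M, which splice
   into the required coresolution. Besides functoriality, the only property
   of Y (x) - that is needed is right exactness, proved on formal sums. *)

Section Cokernel.
Variables (R : pzRingType) (W V : lmodType R) (k : {linear W -> V}).

Definition coker_rel (x y : V) : Prop := exists w, k w = x - y.

Lemma coker_rel_refl x : coker_rel x x.
Proof. by exists 0; rewrite linear0 subrr. Qed.

Lemma coker_rel_sym x y : coker_rel x y -> coker_rel y x.
Proof. by case=> w hw; exists (- w); rewrite linearN hw opprB. Qed.

Lemma coker_rel_trans x y z : coker_rel x y -> coker_rel y z -> coker_rel x z.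
Proof.
by case=> w hw [w' hw']; exists (w + w'); rewrite linearD hw hw' addrA subrK.
Qed.

Lemma coker_relD x y x' y' :
  coker_rel x x' -> coker_rel y y' -> coker_rel (x + y) (x' + y').
Proof.
by case=> w hw [w' hw']; exists (w + w'); rewrite linearD hw hw' opprD addrACA.
Qed.

Lemma coker_relZ r x x' : coker_rel x x' -> coker_rel (r *: x) (r *: x').
Proof. by case=> w hw; exists (r *: w); rewrite linearZZ hw scalerBr. Qed.

Definition coker_repr (x : V) : V :=
  epsilon (inhabits (0 : V)) (fun y => coker_rel y x).

Lemma coker_reprP x : coker_rel (coker_repr x) x.
Proof.
apply: (epsilon_spec (inhabits (0 : V)) (coker_rel^~ x)).
by exists x; apply: coker_rel_refl.
Qed.

Lemma coker_repr_eq x y : coker_rel x y -> coker_repr x = coker_repr y.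
Proof.
move=> xy; rewrite /coker_repr; congr epsilon.
apply: functional_extensionality => z.
apply: propositional_extensionality; split => hz.
  exact: coker_rel_trans hz xy.
exact: coker_rel_trans hz (coker_rel_sym xy).
Qed.

Lemma coker_reprK x : coker_repr (coker_repr x) = coker_repr x.
Proof. exact/coker_repr_eq/coker_reprP. Qed.

Definition coker := {x : V | coker_repr x == x}.
HB.instance Definition _ := Choice.on coker.

Definition coker_proj (x : V) : coker :=
  exist _ (coker_repr x) (introT eqP (coker_reprK x)).

Lemma coker_projK (a : coker) : coker_proj (val a) = a.
Proof. by apply: val_inj => /=; apply/eqP; case: a. Qed.

Lemma coker_proj_eq x y : coker_proj x = coker_proj y <-> coker_rel x y.
Proof.
split=> [/(congr1 val) /= e|xy]; last exact/val_inj/coker_repr_eq.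
apply: coker_rel_trans (coker_rel_sym (coker_reprP x)) _.
by rewrite e; apply: coker_reprP.
Qed.

Lemma coker_proj_val x : coker_rel (val (coker_proj x)) x.
Proof. exact: coker_reprP. Qed.

Definition coker_add (a b : coker) := coker_proj (val a + val b).
Definition coker_opp (a : coker) := coker_proj (- val a).
Definition coker_scale (r : R) (a : coker) := coker_proj (r *: val a).

Lemma coker_addA : associative coker_add.
Proof.
move=> a b c; apply/coker_proj_eq.
apply: coker_rel_trans (coker_relD (coker_rel_refl _) (coker_proj_val _)) _.
rewrite addrA; apply: coker_rel_sym.
exact: coker_relD (coker_proj_val _) (coker_rel_refl _).
Qed.

Lemma coker_addC : commutative coker_add.
Proof. by move=> a b; rewrite /coker_add addrC. Qed.

Lemma coker_add0 : left_id (coker_proj 0) coker_add.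
Proof.
move=> a; rewrite -[RHS]coker_projK; apply/coker_proj_eq.
rewrite -[X in coker_rel _ X]add0r.
exact: coker_relD (coker_proj_val _) (coker_rel_refl _).
Qed.

Lemma coker_addN : left_inverse (coker_proj 0) coker_opp coker_add.
Proof.
move=> a; apply/coker_proj_eq; rewrite -(addNr (val a)).
exact: coker_relD (coker_proj_val _) (coker_rel_refl _).
Qed.

HB.instance Definition _ :=
  GRing.isZmodule.Build coker coker_addA coker_addC coker_add0 coker_addN.

Lemma coker_scaleA a b v :
  coker_scale a (coker_scale b v) = coker_scale (a * b) v.
Proof.
apply/coker_proj_eq; rewrite -scalerA.
exact: coker_relZ (coker_proj_val _).
Qed.

Lemma coker_scale1 : left_id 1 coker_scale.
Proof. by move=> a; rewrite /coker_scale scale1r coker_projK. Qed.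

Lemma coker_scaleDr : right_distributive coker_scale +%R.
Proof.
move=> r a b; apply/coker_proj_eq.
apply: coker_rel_trans (coker_relZ r (coker_proj_val _)) _.
rewrite scalerDr; apply: coker_rel_sym.
exact: coker_relD (coker_proj_val _) (coker_proj_val _).
Qed.

Lemma coker_scaleDl v : {morph coker_scale^~ v : a b / a + b}.
Proof.
move=> a b; apply/coker_proj_eq; rewrite scalerDl; apply: coker_rel_sym.
exact: coker_relD (coker_proj_val _) (coker_proj_val _).
Qed.

HB.instance Definition _ := GRing.Zmodule_isLmodule.Build R coker
  coker_scaleA coker_scale1 coker_scaleDr coker_scaleDl.

Lemma coker_proj_is_linear : linear coker_proj.
Proof.
move=> r x y; apply/coker_proj_eq; apply: coker_rel_sym.
apply: coker_rel_trans (coker_relD (coker_proj_val _) (coker_proj_val _)) _.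
exact: coker_relD (coker_relZ r (coker_proj_val _)) (coker_rel_refl _).
Qed.

HB.instance Definition _ :=
  GRing.isLinear.Build R V coker *:%R coker_proj coker_proj_is_linear.

Lemma coker_proj_surj (a : coker) : exists x, coker_proj x = a.
Proof. by exists (val a); apply: coker_projK. Qed.

Lemma coker_proj0 x : coker_proj x = 0 <-> exists w, k w = x.
Proof.
split=> [/coker_proj_eq [w hw]|[w <-]]; first by exists w; rewrite hw subr0.
by apply/coker_proj_eq; exists w; rewrite subr0.
Qed.

Lemma coker_proj_im w : coker_proj (k w) = 0.
Proof. by apply/coker_proj0; exists w. Qed.

Section Lift.
Variables (U : lmodType R) (f : {linear V -> U}).

(* The proof [fk] is taken as an (unused) argument so that the linear
   instance of [coker_lift fk], whose proof needs it, can be declared. *)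
Definition coker_lift of (forall w, f (k w) = 0) := fun a : coker => f (val a).

Hypothesis fk : forall w, f (k w) = 0.

Lemma coker_lift_proj x : coker_lift fk (coker_proj x) = f x.
Proof.
have [w hw] := coker_proj_val x.
by apply/eqP; rewrite -subr_eq0 -linearB -hw fk.
Qed.

Lemma coker_lift_is_linear : linear (coker_lift fk).
Proof.
move=> r a b; rewrite -[a]coker_projK -[b]coker_projK -linearP.
by rewrite !coker_lift_proj linearP.
Qed.

HB.instance Definition _ :=
  GRing.isLinear.Build R coker U *:%R (coker_lift fk) coker_lift_is_linear.
End Lift.
End Cokernel.

Section FormalSums.
Variables (R : pzRingType) (Y : lmodType R^c).
Implicit Types A B C : lmodType R.

Section ZClosed.
Variables (A : lmodType R) (P : (Y -> A -> int) -> Prop).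
Hypotheses (P0 : P (fun _ _ => 0))
  (PD : forall f g, P f -> P g -> P (fun y a => f y a + g y a))
  (PN : forall f, P f -> P (fun y a => - f y a))
  (PE : forall f g, P f -> (forall y a, f y a = g y a) -> P g).

Lemma closed_scalen h (n : nat) : P h -> P (fun y a => h y a * n%:Z).
Proof.
move=> Ph; elim: n => [|n IH]; first by apply: PE P0 _ => y a; rewrite mulr0.
by apply: PE (PD IH Ph) _ => y a; rewrite intS mulrDr mulr1 addrC.
Qed.

Lemma closed_scale h (c : int) : P h -> P (fun y a => h y a * c).
Proof.
move=> Ph; case: c => n; first exact: closed_scalen.
by apply: PE (PN (closed_scalen n.+1 Ph)) _ => y a; rewrite NegzE mulrN.
Qed.
End ZClosed.

Lemma relN_scale A (h : Y -> A -> int) c : relN h -> relN (fun y a => h y a * c).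
Proof.
by apply: closed_scale;
  [exact: relN0 | exact: relNadd | exact: relNopp | exact: relNext].
Qed.

Lemma fsum_nil A y a : fsum ([::] : seq (int * Y * A)) y a = 0.
Proof. by rewrite /fsum big_nil. Qed.

Lemma fsum_cons A (t : int * Y * A) s y a :
  fsum (t :: s) y a = delta t.1.2 t.2 y a * t.1.1 + fsum s y a.
Proof.
rewrite /fsum big_cons /delta [y == _]eq_sym [a == _]eq_sym.
by case: ifP => _; rewrite ?mul1r ?mul0r ?add0r.
Qed.

Lemma fsum_cat A (s1 s2 : seq (int * Y * A)) y a :
  fsum (s1 ++ s2) y a = fsum s1 y a + fsum s2 y a.
Proof. by rewrite /fsum big_cat. Qed.

Definition fsopp A (s : seq (int * Y * A)) :=
  map (fun t => (- t.1.1, t.1.2, t.2)) s.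

Lemma fsum_opp A (s : seq (int * Y * A)) y a : fsum (fsopp s) y a = - fsum s y a.
Proof.
elim: s => [|t s IH] /=; first by rewrite !fsum_nil oppr0.
by rewrite !fsum_cons IH /= opprD mulrN.
Qed.

(* Words in the generators of [relN]: unlike the coefficient functions in
   [relN], they can be pushed forward along a map [A -> B]. *)
Inductive rel_seq A : seq (int * Y * A) -> Prop :=
| RelSeq0 : rel_seq [::]
| RelSeqCat w1 w2 : rel_seq w1 -> rel_seq w2 -> rel_seq (w1 ++ w2)
| RelSeqOpp w : rel_seq w -> rel_seq (fsopp w)
| RelSeqAddl (y1 y2 : Y) (a : A) :
    rel_seq [:: (1, y1 + y2, a); (-1, y1, a); (-1, y2, a)]
| RelSeqAddr (y : Y) (a1 a2 : A) :
    rel_seq [:: (1, y, a1 + a2); (-1, y, a1); (-1, y, a2)]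
| RelSeqBal (y : Y) (r : R) (a : A) :
    rel_seq [:: (1, (r : R^c) *: y, a); (-1, y, r *: a)].

Lemma relN_rel_seq A (h : Y -> A -> int) :
  relN h -> exists2 w, rel_seq w & forall y a, h y a = fsum w y a.
Proof.
elim=> {h}.
- by exists [::]; [exact: RelSeq0 | move=> y a; rewrite fsum_nil].
- move=> f g _ [w1 H1 E1] _ [w2 H2 E2]; exists (w1 ++ w2); first exact: RelSeqCat.
  by move=> y a; rewrite fsum_cat E1 E2.
- move=> f _ [w H E]; exists (fsopp w); first exact: RelSeqOpp.
  by move=> y a; rewrite fsum_opp E.
- by move=> f g _ [w H E] fg; exists w => // y a; rewrite -fg E.
- move=> y1 y2 a; exists [:: (1, y1 + y2, a); (-1, y1, a); (-1, y2, a)].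
    exact: RelSeqAddl.
  by move=> y b; rewrite !fsum_cons fsum_nil /=; ring.
- move=> y a1 a2; exists [:: (1, y, a1 + a2); (-1, y, a1); (-1, y, a2)].
    exact: RelSeqAddr.
  by move=> z b; rewrite !fsum_cons fsum_nil /=; ring.
- move=> y r a; exists [:: (1, (r : R^c) *: y, a); (-1, y, r *: a)].
    exact: RelSeqBal.
  by move=> z b; rewrite !fsum_cons fsum_nil /=; ring.
Qed.

Lemma rel_seq_relN A (w : seq (int * Y * A)) : rel_seq w -> relN (fsum w).
Proof.
elim=> {w}.
- by apply: relNext (relN0 _ _) _ => y a; rewrite fsum_nil.
- move=> w1 w2 _ H1 _ H2; apply: relNext (relNadd H1 H2) _ => y a.
  by rewrite fsum_cat.
- by move=> w _ H; apply: relNext (relNopp H) _ => y a; rewrite fsum_opp.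
- move=> y1 y2 a; apply: relNext (relNaddl y1 y2 a) _ => y b.
  by rewrite !fsum_cons fsum_nil /=; ring.
- move=> y a1 a2; apply: relNext (relNaddr y a1 a2) _ => z b.
  by rewrite !fsum_cons fsum_nil /=; ring.
- move=> y r a; apply: relNext (relNbal y r a) _ => z b.
  by rewrite !fsum_cons fsum_nil /=; ring.
Qed.

Lemma tmap_cat A B (f : A -> B) (s1 s2 : seq (int * Y * A)) :
  tmap f (s1 ++ s2) = tmap f s1 ++ tmap f s2.
Proof. exact: map_cat. Qed.

Lemma tmap_opp A B (f : A -> B) (s : seq (int * Y * A)) :
  tmap f (fsopp s) = fsopp (tmap f s).
Proof. by rewrite /tmap /fsopp -!map_comp. Qed.

Lemma tmap_comp A B C (f : A -> B) (g : B -> C) (s : seq (int * Y * A)) :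
  tmap g (tmap f s) = tmap (g \o f) s.
Proof. by rewrite /tmap -map_comp. Qed.

Lemma eq_tmap A B (f g : A -> B) (s : seq (int * Y * A)) :
  f =1 g -> tmap f s = tmap g s.
Proof. by move=> fg; apply: eq_map => t; rewrite fg. Qed.

Lemma tmap_id A (s : seq (int * Y * A)) : tmap id s = s.
Proof. by rewrite /tmap; elim: s => [|[[c y] a] s IH] //=; rewrite IH. Qed.

Lemma rel_seq_tmap A B (f : {linear A -> B}) w : rel_seq w -> rel_seq (tmap f w).
Proof.
elim=> {w}.
- exact: RelSeq0.
- by move=> w1 w2 _ H1 _ H2; rewrite tmap_cat; apply: RelSeqCat.
- by move=> w _ H; rewrite tmap_opp; apply: RelSeqOpp.
- by move=> y1 y2 a; apply: RelSeqAddl.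
- by move=> y a1 a2; rewrite /tmap /= linearD; apply: RelSeqAddr.
- by move=> y r a; rewrite /tmap /= linearZZ; apply: RelSeqBal.
Qed.

Lemma fsum_tmap A B (f : A -> B) (U : seq A) (s : seq (int * Y * A)) y b :
  uniq U -> (forall t, t \in s -> t.2 \in U) ->
  fsum (tmap f s) y b = \sum_(a <- U | f a == b) fsum s y a.
Proof.
move=> uU; elim: s => [|t s IH] sU.
  by rewrite fsum_nil big1 // => a _; rewrite fsum_nil.
rewrite /tmap /= -/(tmap f s) fsum_cons /= IH; last first.
  by move=> t' ht'; apply: sU; rewrite inE ht' orbT.
under eq_bigr do rewrite fsum_cons.
rewrite big_split /=; congr (_ + _).
rewrite /delta; case: (y == t.1.2) => /=; last first.
  by rewrite mul0r big1 // => a _; rewrite mul0r.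
rewrite -big_distrl /= -big_mkcondr /=; congr (_ * _).
have tU : t.2 \in U by apply: sU; rewrite mem_head.
case: (f t.2 =P b) => [ftb|ftb].
  rewrite (eq_bigl (eq_op^~ t.2)); last first.
    by move=> a; case: (a =P t.2) => [->|]; rewrite ?andbF // ftb eqxx.
  rewrite big_const_seq -[count _ U]/(count_mem t.2 U) (count_uniq_mem _ uU) tU.
  by rewrite ftb eqxx /= addr0.
rewrite big_pred0 => [|a]; first by case: eqP => // bft; case: ftb.
by case: (a =P t.2) => [->|]; rewrite ?andbF ?andbT //; case: eqP.
Qed.

Lemma eq_fsum_tmap A B (f : A -> B) (s1 s2 : seq (int * Y * A)) :
  (forall y a, fsum s1 y a = fsum s2 y a) ->
  forall y b, fsum (tmap f s1) y b = fsum (tmap f s2) y b.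
Proof.
move=> E y b; set U := undup (map (fun t => t.2) (s1 ++ s2)).
have uU : uniq U by apply: undup_uniq.
rewrite (@fsum_tmap _ _ f U s1) // ?(@fsum_tmap _ _ f U s2) //.
- by apply: eq_bigr => a _; apply: E.
- by move=> t ht; rewrite mem_undup map_f // mem_cat ht orbT.
- by move=> t ht; rewrite mem_undup map_f // mem_cat ht.
Qed.

Lemma tzero_tmap A B (f : {linear A -> B}) (s : seq (int * Y * A)) :
  tzero s -> tzero (tmap f s).
Proof.
move=> /relN_rel_seq [w Hw E].
apply: relNext (rel_seq_relN (rel_seq_tmap f Hw)) _.
by apply: eq_fsum_tmap => y a; rewrite E.
Qed.

Lemma teq_tmap A B (f : {linear A -> B}) (s t : seq (int * Y * A)) :
  teq s t -> teq (tmap f s) (tmap f t).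
Proof.
move=> st; have : tzero (s ++ fsopp t).
  by apply: relNext st _ => y a; rewrite fsum_cat fsum_opp.
move=> /(tzero_tmap f); rewrite /tzero tmap_cat tmap_opp => H.
by apply: relNext H _ => y a; rewrite fsum_cat fsum_opp.
Qed.

Lemma teq_refl A (s : seq (int * Y * A)) : teq s s.
Proof. by apply: relNext (relN0 _ _) _ => y a; rewrite subrr. Qed.

Lemma teq_sym A (s t : seq (int * Y * A)) : teq s t -> teq t s.
Proof. by move=> H; apply: relNext (relNopp H) _ => y a; rewrite opprB. Qed.

Lemma teq_trans A (s t u : seq (int * Y * A)) : teq s t -> teq t u -> teq s u.
Proof.
by move=> H1 H2; apply: relNext (relNadd H1 H2) _ => y a; rewrite addrA subrK.
Qed.

Lemma tzero_teq A (s t : seq (int * Y * A)) : tzero s -> teq s t -> tzero t.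
Proof.
move=> H1 H2; apply: relNext (relNadd H1 (relNopp H2)) _ => y a.
by rewrite opprB addrC subrK.
Qed.

Lemma teq_tzero A (s t : seq (int * Y * A)) : tzero s -> tzero t -> teq s t.
Proof. by move=> H1 H2; apply: relNadd H1 (relNopp H2). Qed.

Lemma tzero_nil A : tzero ([::] : seq (int * Y * A)).
Proof. by apply: relNext (relN0 _ _) _ => y a; rewrite fsum_nil. Qed.

Lemma teq_cat A (s1 s2 t1 t2 : seq (int * Y * A)) :
  teq s1 t1 -> teq s2 t2 -> teq (s1 ++ s2) (t1 ++ t2).
Proof.
move=> H1 H2; apply: relNext (relNadd H1 H2) _ => y a.
by rewrite !fsum_cat opprD addrACA.
Qed.

Lemma relN_delta0 A (y : Y) : relN (delta y (0 : A)).
Proof.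
by apply: relNext (relNopp (relNaddr y 0 0)) _ => z b; rewrite addr0; ring.
Qed.

Lemma tzero_tmap0 A B (f : A -> B) (s : seq (int * Y * A)) :
  f =1 (fun=> 0) -> tzero (tmap f s).
Proof.
move=> f0; elim: s => [|t s IH]; first exact: tzero_nil.
apply: relNext (relNadd (relN_scale t.1.1 (relN_delta0 B t.1.2)) IH) _ => y b.
by rewrite /tmap /= -/(tmap f s) fsum_cons /= f0.
Qed.

Lemma teq_tmapD A B (f g h : A -> B) (s : seq (int * Y * A)) :
  (forall a, h a = f a + g a) -> teq (tmap h s) (tmap f s ++ tmap g s).
Proof.
move=> hfg; elim: s => [|t s IH]; first exact: teq_refl.
have H := relNadd (relN_scale t.1.1 (relNaddr t.1.2 (f t.2) (g t.2))) IH.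
apply: relNext H _ => y b.
by rewrite /tmap /= -!/(tmap _ s) !fsum_cons /= !fsum_cat !fsum_cons /= hfg; ring.
Qed.

Lemma tmap_surj A B (p : A -> B) : (forall b, exists a, p a = b) ->
  forall s : seq (int * Y * B), exists t, tmap p t = s.
Proof.
move=> ps; elim=> [|[[c y] b] s [t <-]]; first by exists [::].
by have [a <-] := ps b; exists ((c, y, a) :: t).
Qed.

Section RightExact.
Variables (A B C : lmodType R) (f : A -> B) (q : {linear B -> C}).
Hypotheses (q_surj : forall c, exists b, q b = c)
  (ker_q : forall b b', q b = q b' -> exists a, f a = b - b').

Definition qsection (c : C) : B := epsilon (inhabits (0 : B)) (fun b => q b = c).

Lemma qsectionK c : q (qsection c) = c.
Proof. exact: epsilon_spec (inhabits (0 : B)) (fun b => q b = c) (q_surj c). Qed.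

(* Right exactness: formal sums over [C] are carried back to [B] along the
   set-theoretic section [qsection]; since [q] has kernel [im f], relations
   are carried to relations up to the image of [f]. *)
Definition lift_coef (h : Y -> C -> int) : Y -> B -> int :=
  fun y b => if qsection (q b) == b then h y (q b) else 0.

Definition in_image (h : Y -> B -> int) :=
  exists t, relN (fun y b => fsum (tmap f t) y b - h y b).

Lemma in_image0 : in_image (fun _ _ => 0).
Proof.
by exists [::]; apply: relNext (relN0 _ _) _ => y b; rewrite fsum_nil subr0.
Qed.

Lemma in_imageD h1 h2 :
  in_image h1 -> in_image h2 -> in_image (fun y b => h1 y b + h2 y b).
Proof.
move=> [t1 H1] [t2 H2]; exists (t1 ++ t2).
apply: relNext (relNadd H1 H2) _ => y b.
by rewrite tmap_cat fsum_cat opprD addrACA.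
Qed.

Lemma in_imageN h : in_image h -> in_image (fun y b => - h y b).
Proof.
move=> [t H]; exists (fsopp t); apply: relNext (relNopp H) _ => y b.
by rewrite tmap_opp fsum_opp opprB opprK addrC.
Qed.

Lemma in_imageE h1 h2 :
  in_image h1 -> (forall y b, h1 y b = h2 y b) -> in_image h2.
Proof. by move=> [t H] E; exists t; apply: relNext H _ => y b; rewrite E. Qed.

Lemma in_image_relN h : relN h -> in_image h.
Proof.
move=> H; exists [::]; apply: relNext (relNopp H) _ => y b.
by rewrite fsum_nil sub0r.
Qed.

Lemma in_image_scale h c : in_image h -> in_image (fun y b => h y b * c).
Proof.
apply: closed_scale;
  [exact: in_image0|exact: in_imageD|exact: in_imageN|exact: in_imageE].
Qed.

Lemma in_image_ker (y : Y) (b b' : B) :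
  q b = q b' -> in_image (fun z x => delta y b z x - delta y b' z x).
Proof.
move=> /ker_q [a fa]; exists [:: (1, y, a)].
apply: relNext (relNopp (relNaddr y b' (b - b'))) _ => z x.
by rewrite fsum_cons fsum_nil /= fa [b' + _]addrC subrK; ring.
Qed.

Lemma lift_coef_delta (y : Y) (c : C) (z : Y) (b : B) :
  (if qsection (q b) == b then delta y c z (q b) else 0) =
  delta y (qsection c) z b.
Proof.
rewrite /delta; case: (z == y) => /=; last by case: ifP.
case: (b =P qsection c) => [->|ne]; first by rewrite qsectionK !eqxx.
case: (qsection (q b) =P b) => [e|] //; case: (q b =P c) => [e'|] //.
by case: ne; rewrite -e e'.
Qed.

Lemma in_image_lift h : relN h -> in_image (lift_coef h).
Proof.
rewrite /lift_coef; elim=> {h}.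
- by apply: in_imageE in_image0 _ => y b; case: ifP.
- move=> h1 h2 _ H1 _ H2; apply: in_imageE (in_imageD H1 H2) _ => y b.
  by case: ifP; rewrite ?addr0.
- move=> h _ H; apply: in_imageE (in_imageN H) _ => y b.
  by case: ifP; rewrite ?oppr0.
- by move=> h1 h2 _ H E; apply: in_imageE H _ => y b; rewrite E.
- move=> y1 y2 c.
  apply: in_imageE (in_image_relN (relNaddl y1 y2 (qsection c))) _ => z b.
  by rewrite -!lift_coef_delta; case: ifP; rewrite ?subr0.
- move=> y c1 c2.
  have H1 := in_image_relN (relNaddr y (qsection c1) (qsection c2)).
  have H2 := @in_image_ker y (qsection (c1 + c2)) (qsection c1 + qsection c2).
  rewrite linearD !qsectionK in H2; have {}H2 := H2 erefl.
  apply: in_imageE (in_imageD H1 H2) _ => z b.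
  by rewrite -!lift_coef_delta; case: ifP => _; rewrite ?subr0 //; ring.
- move=> y r c.
  have H1 := in_image_relN (relNbal y r (qsection c)).
  have H2 := @in_image_ker y (r *: qsection c) (qsection (r *: c)).
  rewrite linearZZ !qsectionK in H2; have {}H2 := H2 erefl.
  apply: in_imageE (in_imageD H1 H2) _ => z b.
  by rewrite -!lift_coef_delta; case: ifP => _; rewrite ?subr0 //; ring.
Qed.

Lemma in_image_sub_lift (s : seq (int * Y * B)) :
  in_image (fun y b => fsum s y b - lift_coef (fsum (tmap q s)) y b).
Proof.
rewrite /lift_coef; elim: s => [|t s IH].
  apply: in_imageE in_image0 _ => y b.
  by rewrite /tmap /= !fsum_nil; case: ifP; rewrite subr0.
have H := @in_image_ker t.1.2 t.2 (qsection (q t.2)) (esym (qsectionK _)).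
apply: in_imageE (in_imageD (in_image_scale t.1.1 H) IH) _ => y b.
rewrite /tmap /= -/(tmap q s) !fsum_cons /=.
by move: (lift_coef_delta t.1.2 (q t.2) y b); case: ifP => _ <-; ring.
Qed.

Lemma tmap_right_exact (s : seq (int * Y * B)) :
  tzero (tmap q s) -> exists t, teq (tmap f t) s.
Proof.
move=> /in_image_lift H; have [t Ht] := in_imageD (in_image_sub_lift s) H.
by exists t; apply: relNext Ht _ => y b; rewrite subrK.
Qed.
End RightExact.
End FormalSums.


Section Factor.
Variables (R : pzRingType) (A B C : lmodType R).
Variables (phi : {linear B -> C}) (f : {linear A -> C}).

Definition factor of injective phi & (forall a, exists b, phi b = f a) :=
  fun a => epsilon (inhabits (0 : B)) (fun b => phi b = f a).

Hypotheses (phi_inj : injective phi) (f_im : forall a, exists b, phi b = f a).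

Lemma factorK a : phi (factor phi_inj f_im a) = f a.
Proof. exact: epsilon_spec (inhabits (0 : B)) (fun b => phi b = f a) (f_im a). Qed.

Lemma factor_is_linear : linear (factor phi_inj f_im).
Proof. by move=> r a b; apply: phi_inj; rewrite linearP !factorK linearP. Qed.

HB.instance Definition _ :=
  GRing.isLinear.Build R A B *:%R (factor phi_inj f_im) factor_is_linear.
End Factor.

Section Exactness.
Variables (R : pzRingType) (Ycl : lmodType R^c -> Prop).
Implicit Types A B C : lmodType R.

Lemma tzero_tmap_im A B C (f : A -> B) (g : {linear B -> C}) (Y : lmodType R^c)
    (s : seq (int * Y * B)) :
  (forall a, g (f a) = 0) -> (exists t, teq (tmap f t) s) -> tzero (tmap g s).
Proof.
move=> gf0 [t /(teq_tmap g)]; rewrite tmap_comp; apply: tzero_teq.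
exact: tzero_tmap0.
Qed.

Lemma mexact_coker A B (k : {linear A -> B}) : mexact k (coker_proj k).
Proof. by move=> x; rewrite coker_proj0. Qed.

Lemma Ymexact_coker A B (k : {linear A -> B}) : Ymexact Ycl k (coker_proj k).
Proof.
move=> Y _ s; split; last exact/tzero_tmap_im/coker_proj_im.
apply: tmap_right_exact; first exact: coker_proj_surj.
by move=> x x' /coker_proj_eq.
Qed.

Lemma Yminj_comp A B C (f : {linear A -> B}) (g : {linear B -> C}) :
  Yminj Ycl f -> Yminj Ycl g -> Yminj Ycl (g \o f).
Proof. by move=> Yf Yg Y HY s; rewrite -tmap_comp => /(Yg Y HY)/(Yf Y HY). Qed.

Lemma mexact_through A A' B C (h : A -> A') (f : A -> B) (f' : A' -> B)
    (g : B -> C) :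
  mexact f g -> f' \o h =1 f -> (forall a, g (f' a) = 0) -> mexact f' g.
Proof.
move=> fg hf gf' y; split=> [/(fg y).1 [x <-]|[x <-] //].
by exists (h x); apply: hf.
Qed.

Lemma Ymexact_through A A' B C (h : A -> A') (f : A -> B) (f' : {linear A' -> B})
    (g : {linear B -> C}) :
  Ymexact Ycl f g -> f' \o h =1 f -> (forall a, g (f' a) = 0) -> Ymexact Ycl f' g.
Proof.
move=> Yfg hf gf' Y HY s; split; last exact: tzero_tmap_im.
move=> /(Yfg Y HY s).1 [t Ht]; exists (tmap h t).
by rewrite tmap_comp (eq_tmap _ hf).
Qed.

Definition Yexact_ses A B C (i : {linear A -> B}) (q : {linear B -> C}) :=
  [/\ injective i, forall c, exists b, q b = c, mexact i q, Yminj Ycl i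
    & Ymexact Ycl i q].

Lemma Yexact_ses_coker A B (i : {linear A -> B}) :
  injective i -> Yminj Ycl i -> Yexact_ses i (coker_proj i).
Proof.
split=> //; [exact: coker_proj_surj | exact: mexact_coker | exact: Ymexact_coker].
Qed.

Section Splice.
Variables (L0 X0 L1 X1 L2 X2 : lmodType R).

Lemma mexact_splice0 (i0 : L0 -> X0) (q0 : X0 -> L1) (i1 : {linear L1 -> X1}) :
  mexact i0 q0 -> injective i1 -> mexact i0 (i1 \o q0).
Proof.
move=> iq i1_inj x; rewrite -(iq x) /=; split; last by move->; rewrite linear0.
by move=> h; apply: i1_inj; rewrite h linear0.
Qed.

Lemma mexact_splice (q0 : X0 -> L1) (i1 : L1 -> X1) (q1 : X1 -> L2)
    (i2 : {linear L2 -> X2}) :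
  (forall l, exists x, q0 x = l) -> mexact i1 q1 -> injective i2 ->
  mexact (i1 \o q0) (i2 \o q1).
Proof.
move=> q0_surj iq i2_inj x /=; split.
  move=> h; have /(iq x).1 [l <-] : q1 x = 0 by apply: i2_inj; rewrite h linear0.
  by have [y <-] := q0_surj l; exists y.
by move=> [y <-] /=; rewrite (iq _).2 ?linear0 //; exists (q0 y).
Qed.

Lemma Ymexact_splice0 (i0 : L0 -> X0) (q0 : {linear X0 -> L1})
    (i1 : {linear L1 -> X1}) :
  Ymexact Ycl i0 q0 -> Yminj Ycl i1 -> Ymexact Ycl i0 (i1 \o q0).
Proof.
move=> Yiq Yi1 Y HY s; rewrite -(Yiq Y HY s) -tmap_comp.
by split; [exact: Yi1 | exact: tzero_tmap].
Qed.

Lemma Ymexact_splice (q0 : {linear X0 -> L1}) (i1 : {linear L1 -> X1})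
    (q1 : {linear X1 -> L2}) (i2 : {linear L2 -> X2}) :
  (forall l, exists x, q0 x = l) -> Ymexact Ycl i1 q1 -> Yminj Ycl i2 ->
  Ymexact Ycl (i1 \o q0) (i2 \o q1).
Proof.
move=> q0_surj Yiq Yi2 Y HY s; rewrite -tmap_comp; split.
  move=> /(Yi2 Y HY) /(Yiq Y HY s).1 [t Ht].
  have [t' t't] := tmap_surj q0_surj t.
  by exists t'; rewrite -tmap_comp t't.
move=> [t Ht]; apply: tzero_tmap; apply/(Yiq Y HY s).2.
by exists (tmap q0 t); rewrite tmap_comp.
Qed.
End Splice.

Lemma coresolution_cons (Acl : lmodType R -> Prop) (L P : lmodType R)
    (G : nat -> lmodType R) (j : {linear L -> P}) (rho : {linear P -> G 0%N})
    (d : forall n, {linear G n -> G n.+1}) :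
  Acl P -> (forall n, Acl (G n)) ->
  injective j -> mexact j rho -> mexact rho (d 0%N) ->
  (forall n, mexact (d n) (d n.+1)) ->
  Yminj Ycl j -> Ymexact Ycl j rho -> Ymexact Ycl rho (d 0%N) ->
  (forall n, Ymexact Ycl (d n) (d n.+1)) ->
  has_Y_exact_coresolution Ycl Acl L.
Proof.
move=> AP AG j_inj ex_j ex_rho ex_d Yinj_j Yex_j Yex_rho Yex_d.
pose G' n := if n is n'.+1 then G n' else P.
pose d' n : {linear G' n -> G' n.+1} :=
  if n is n'.+1 return {linear G' n -> G' n.+1} then d n' else rho.
exists G', j, d'.
split; first by case.
do 3!split=> //; first by case.
by do 2!split=> //; case.
Qed.

Lemma coresolution_mono (Acl Bcl : lmodType R -> Prop) (L : lmodType R) :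
  (forall A, Acl A -> Bcl A) ->
  has_Y_exact_coresolution Ycl Acl L -> has_Y_exact_coresolution Ycl Bcl L.
Proof.
by move=> AB [G [e [d [GA rest]]]]; exists G, e, d; split=> // n; apply/AB/GA.
Qed.
End Exactness.

Section Iterate.
Variables (R : pzRingType) (Ycl : lmodType R^c -> Prop).
Variables (Acl Good : lmodType R -> Prop).

Record ses_step (L : lmodType R) := SesStep {
  step_mid : lmodType R;
  step_next : lmodType R;
  step_in : {linear L -> step_mid};
  step_out : {linear step_mid -> step_next};
  step_mid_cl : Acl step_mid;
  step_ses : Yexact_ses Ycl step_in step_out;
  step_next_good : Good step_next }.

Hypothesis step : forall L, Good L -> inhabited (ses_step L).
Variables (M : lmodType R) (M_good : Good M).

Definition choose_step L (L_good : Good L) : ses_step L :=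
  epsilon (step L_good) (fun=> True).

Fixpoint stage (n : nat) : {L : lmodType R & Good L} :=
  if n is n'.+1 then
    let s := choose_step (projT2 (stage n')) in existT _ _ (step_next_good s)
  else existT _ M M_good.

Let step_at n := choose_step (projT2 (stage n)).

Lemma coresolution_of_steps : has_Y_exact_coresolution Ycl Acl M.
Proof.
pose i n := step_in (step_at n); pose q n := step_out (step_at n).
have inj n : injective (i n) by case: (step_ses (step_at n)).
have surj n : forall l, exists x, q n x = l by case: (step_ses (step_at n)).
have ex n : mexact (i n) (q n) by case: (step_ses (step_at n)).
have Yinj n : Yminj Ycl (i n) by case: (step_ses (step_at n)).
have Yex n : Ymexact Ycl (i n) (q n) by case: (step_ses (step_at n)).
exists (fun n => step_mid (step_at n)), (i 0%N), (fun n => i n.+1 \o q n).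
split=> [n|]; first exact: step_mid_cl.
split; first exact: (inj 0%N).
split; first exact: mexact_splice0 (ex 0%N) (inj 1%N).
split=> [n|]; first exact: mexact_splice (surj n) (ex n.+1) (inj n.+2).
split; first exact: (Yinj 0%N).
split; first exact: Ymexact_splice0 (Yex 0%N) (Yinj 1%N).
by move=> n; apply: Ymexact_splice (surj n) (Yex n.+1) (Yinj n.+2).
Qed.
End Iterate.

Section GorensteinFlat.
Variables (R : pzRingType) (Xcl : lmodType R -> Prop).
Variable Ycl : lmodType R^c -> Prop.

Lemma odd_absz_add1 (i : int) : odd `|i + 1| = ~~ odd `|i|.
Proof.
case: i => n; first by rewrite addrC -intS.
by case: n => [|n] //=; rewrite subSS subn0 negbK.
Qed.

Section IdZero.
Variable A : lmodType R.

Lemma mexact_id0 : mexact (@idfun A) (\0 : {linear A -> A}).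
Proof. by move=> x; split=> [_|//]; exists x. Qed.

Lemma mexact_0id : mexact (\0 : {linear A -> A}) (@idfun A).
Proof. by move=> x /=; split=> [->|[y <-]] //; exists 0. Qed.

Lemma Ymexact_id0 : Ymexact Ycl (@idfun A) (\0 : {linear A -> A}).
Proof.
move=> Y _ s; split=> [_|]; last by move=> _; apply: tzero_tmap0.
by exists s; rewrite tmap_id; apply: teq_refl.
Qed.

Lemma Ymexact_0id : Ymexact Ycl (\0 : {linear A -> A}) (@idfun A).
Proof.
move=> Y _ s; split; last exact: tzero_tmap_im.
by rewrite tmap_id => s0; exists s; exact: teq_tzero (tzero_tmap0 _ _) s0.
Qed.
End IdZero.

Lemma GFlat_Xcl X : Xcl X -> GFlat Xcl Ycl X.
Proof.
move=> HX; pose idX : {linear X -> X} := idfun; pose zX : {linear X -> X} := \0.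
pose d (i : int) := if odd `|i| then idX else zX.
have dS i : d (i + 1) = if odd `|i| then zX else idX.
  by rewrite /d odd_absz_add1; case: odd.
exists (fun=> X), d; split=> //.
split=> [i|].
  by rewrite dS /d; case: odd; [apply: mexact_id0 | apply: mexact_0id].
split=> [i|].
  by rewrite dS /d; case: odd; [apply: Ymexact_id0 | apply: Ymexact_0id].
by exists idX; split=> //; apply: mexact_id0.
Qed.

Section CompleteResolution.
Variables (G : lmodType R) (C : int -> lmodType R).
Variable dC : forall i, {linear C i -> C (i + 1)}.
Hypotheses (C_ex : forall i, mexact (dC i) (dC (i + 1)))
  (C_Yex : forall i, Ymexact Ycl (dC i) (dC (i + 1))).
Variable phi : {linear G -> C 0}.
Hypotheses (phi_inj : injective phi)
  (phi_im : forall x, dC 0 x = 0 <-> exists g, phi g = x).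

(* [d] below, the corestriction of [dC (-1)], identifies [G] with the cokernel
   of [dC (-2)]: a formal sum killed by [phi] lifts along [d] to a cycle over
   [C (-1)], which is a boundary, hence is killed by [d]. *)
Lemma complete_resolution_Yminj : Yminj Ycl phi.
Proof.
have im c : exists g, phi g = dC (-1) c.
  by apply/phi_im; apply: (@C_ex (-1) (dC (-1) c)).2; exists c.
pose d := factor phi_inj im.
have dK c : phi (d c) = dC (-1) c := factorK phi_inj im c.
have d_surj g : exists c, d c = g.
  have : dC 0 (phi g) = 0 by apply/phi_im; exists g.
  move=> /(@C_ex (-1) (phi g)).1 [c hc].
  by exists c; apply: phi_inj; rewrite dK.
move=> Y HY s; have [t <-] := tmap_surj d_surj s.
rewrite tmap_comp (eq_tmap _ dK) => /(@C_Yex (-2) Y HY t).1.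
apply: tzero_tmap_im => c; apply: phi_inj; rewrite dK linear0.
by apply: (@C_ex (-2) _).2; exists c.
Qed.

Lemma GFlat_coker : (forall i, Xcl (C i)) -> GFlat Xcl Ycl (coker phi).
Proof.
move=> CX; have dC_phi g : dC 0 (phi g) = 0 by apply/phi_im; exists g.
exists (fun i => C (i + 1)), (fun i => dC (i + 1)).
split=> [i|]; first exact: CX.
split=> [i|]; first exact: C_ex.
split=> [i|]; first exact: C_Yex.
exists (coker_lift dC_phi : {linear coker phi -> C (0 + 1)}); split.
  apply: raddf_inj => a /=; rewrite -[a]coker_projK coker_lift_proj.
  by move=> /phi_im [g <-]; rewrite coker_proj_im.
move=> x; split=> [/(@C_ex 0 x).1 [y <-] | [a <-] /=].
  by exists (coker_proj phi y) => /=; rewrite coker_lift_proj.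
by rewrite -[a]coker_projK coker_lift_proj; apply: (@C_ex 0 _).2; exists (val a).
Qed.
End CompleteResolution.
End GorensteinFlat.

Section Pushout.
Variables (R : pzRingType) (Ycl : lmodType R^c -> Prop).
Variables (L G0 G1 G2 G3 C0 : lmodType R).
Variables (e : {linear L -> G0}) (d0 : {linear G0 -> G1}).
Variables (d1 : {linear G1 -> G2}) (d2 : {linear G2 -> G3}).
Variable phi : {linear G0 -> C0}.
Hypotheses (ex_e : mexact e d0) (ex_d0 : mexact d0 d1) (ex_d1 : mexact d1 d2).
Hypotheses (Yex_e : Ymexact Ycl e d0) (Yex_d0 : Ymexact Ycl d0 d1)
  (Yex_d1 : Ymexact Ycl d1 d2).
Hypothesis phi_inj : injective phi.

Definition pushout_rel (g : G0) : C0 * G1 := (- phi g, d0 g).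

Lemma pushout_rel_is_linear : linear pushout_rel.
Proof. by move=> r g g'; rewrite /pushout_rel !linearP. Qed.

HB.instance Definition _ :=
  GRing.isLinear.Build R G0 (C0 * G1)%type *:%R pushout_rel pushout_rel_is_linear.

Local Notation pushout := (coker pushout_rel).
Local Notation pproj := (coker_proj pushout_rel).

Definition pushout_inl (x : C0) : pushout := pproj (x, 0).
Definition pushout_inr (g : G1) : pushout := pproj (0, g).

Lemma pushout_inl_is_linear : linear pushout_inl.
Proof.
move=> r x y; rewrite /pushout_inl -linearP; congr pproj.
by apply/eqP; rewrite xpair_eqE /= scaler0 addr0 !eqxx.
Qed.

Lemma pushout_inr_is_linear : linear pushout_inr.
Proof.
move=> r x y; rewrite /pushout_inr -linearP; congr pproj.
by apply/eqP; rewrite xpair_eqE /= scaler0 addr0 !eqxx.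
Qed.

HB.instance Definition _ :=
  GRing.isLinear.Build R C0 pushout *:%R pushout_inl pushout_inl_is_linear.
HB.instance Definition _ :=
  GRing.isLinear.Build R G1 pushout *:%R pushout_inr pushout_inr_is_linear.

Lemma pushout_projE p : pproj p = pushout_inl p.1 + pushout_inr p.2.
Proof.
case: p => x g; rewrite /pushout_inl /pushout_inr -linearD; congr pproj.
by apply/eqP; rewrite xpair_eqE /= addr0 add0r !eqxx.
Qed.

Lemma pushout_inl_phi g : pushout_inl (phi g) = pushout_inr (d0 g).
Proof.
apply/coker_proj_eq; exists (- g).
by apply/eqP; rewrite xpair_eqE /= !linearN opprK subr0 sub0r !eqxx.
Qed.

Lemma pushout_rel_fst g : (coker_proj phi \o fst) (pushout_rel g) = 0.
Proof. by apply/coker_proj0; exists (- g); rewrite linearN. Qed.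

Lemma pushout_rel_snd g : (d1 \o snd) (pushout_rel g) = 0.
Proof. by apply: (ex_d0 _).2; exists g. Qed.

Definition pushout_quot : {linear pushout -> coker phi} :=
  coker_lift pushout_rel_fst.
Definition pushout_d : {linear pushout -> G2} := coker_lift pushout_rel_snd.

Lemma pushout_quotE p : pushout_quot (pproj p) = coker_proj phi p.1.
Proof. exact: coker_lift_proj. Qed.

Lemma pushout_dE p : pushout_d (pproj p) = d1 p.2.
Proof. exact: coker_lift_proj. Qed.

Lemma pushout_inl_im l : pushout_inl ((phi \o e) l) = 0.
Proof.
rewrite pushout_inl_phi; have -> : d0 (e l) = 0 by apply: (ex_e _).2; exists l.
exact: linear0.
Qed.

Definition coker_to_pushout : {linear coker (phi \o e) -> pushout} :=
  coker_lift pushout_inl_im.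

Lemma coker_to_pushoutE x : coker_to_pushout (coker_proj _ x) = pushout_inl x.
Proof. exact: coker_lift_proj. Qed.

Lemma pushout_inr_inj : injective pushout_inr.
Proof.
apply: raddf_inj => g /coker_proj0 [h /eqP]; rewrite xpair_eqE /= => /andP[].
by rewrite oppr_eq0 raddf_eq0 // => /eqP -> /eqP <-; rewrite linear0.
Qed.

Lemma pushout_quot_surj a : exists p, pushout_quot p = a.
Proof.
have [x <-] := coker_proj_surj a.
by exists (pushout_inl x); rewrite pushout_quotE.
Qed.

Lemma mexact_pushout_inr_quot : mexact pushout_inr pushout_quot.
Proof.
move=> p; rewrite -(coker_projK p) pushout_quotE.
split=> [/coker_proj0 [h hx] | [g gp]].
  exists ((val p).2 + d0 h).
  by rewrite pushout_projE -hx pushout_inl_phi -linearD addrC.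
by rewrite -pushout_quotE -gp /pushout_inr pushout_quotE linear0.
Qed.

Lemma coker_to_pushout_inj : injective coker_to_pushout.
Proof.
move=> a b; rewrite -[a]coker_projK -[b]coker_projK !coker_to_pushoutE.
move=> /coker_proj_eq [g /eqP]; rewrite xpair_eqE /= subr0.
move=> /andP[/eqP phig /eqP d0g].
have [l el] := (ex_e g).1 d0g.
by apply/coker_proj_eq; exists (- l); rewrite linearN /= el.
Qed.

Lemma pushout_d_coker a : pushout_d (coker_to_pushout a) = 0.
Proof.
by rewrite -[a]coker_projK coker_to_pushoutE /pushout_inl pushout_dE linear0.
Qed.

Lemma mexact_coker_to_pushout_d : mexact coker_to_pushout pushout_d.
Proof.
move=> p; split=> [|[a <-]]; last exact: pushout_d_coker.
rewrite -(coker_projK p) pushout_dE => /(ex_d0 _).1 [h hp].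
exists (coker_proj (phi \o e) ((val p).1 + phi h)); rewrite coker_to_pushoutE.
by rewrite pushout_projE -hp -pushout_inl_phi -linearD.
Qed.

Lemma pushout_d_inr g : pushout_d (pushout_inr g) = d1 g.
Proof. exact: pushout_dE. Qed.

Lemma pushout_dK p : d2 (pushout_d p) = 0.
Proof.
by rewrite -(coker_projK p) pushout_dE; apply: (ex_d1 _).2; exists (val p).2.
Qed.

Lemma mexact_pushout_d : mexact pushout_d d2.
Proof. exact: mexact_through ex_d1 pushout_d_inr pushout_dK. Qed.

(* If [s1] over [C0] dies in the pushout, right exactness writes its image in
   [C0 * G1] as [pushout_rel u]; then [d0 u] vanishes, so [u] comes from [L]
   and [s1] from [phi \o e]. *)
Lemma Yminj_coker_to_pushout : Yminj Ycl coker_to_pushout.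
Proof.
move=> Y HY s; have [s1 <-] := tmap_surj (@coker_proj_surj _ _ _ (phi \o e)) s.
rewrite tmap_comp (eq_tmap _ coker_to_pushoutE).
have -> : tmap pushout_inl s1 = tmap pproj (tmap (fun x => (x, 0 : G1)) s1).
  by rewrite tmap_comp.
move=> /(Ymexact_coker pushout_rel HY _).1 [u Hu].
have d0u : tzero (tmap d0 u).
  have := teq_sym (teq_tmap snd Hu); rewrite !tmap_comp; apply: tzero_teq.
  exact: tzero_tmap0.
have [v Hv] := (Yex_e HY u).1 d0u.
apply: (@tzero_tmap_im _ _ _ _ (fst \o pushout_rel \o e)) => [l|].
  by apply/coker_proj0; exists (- l); rewrite linearN.
exists v; have := teq_tmap fst (teq_trans (teq_tmap pushout_rel Hv) Hu).
by rewrite !tmap_comp [X in teq _ X](eq_tmap _ (_ : _ =1 id)) ?tmap_id.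
Qed.

Lemma Ymexact_coker_to_pushout_d : Ymexact Ycl coker_to_pushout pushout_d.
Proof.
move=> Y HY s; split; last exact: tzero_tmap_im pushout_d_coker.
have [s' <-] := tmap_surj (@coker_proj_surj _ _ _ pushout_rel) s.
rewrite tmap_comp (eq_tmap _ pushout_dE) -tmap_comp => /(Yex_d0 HY _).1 [u Hu].
exists (tmap (coker_proj (phi \o e)) (tmap fst s' ++ tmap phi u)).
rewrite tmap_comp (eq_tmap _ coker_to_pushoutE) tmap_cat.
apply: teq_trans (teq_sym (teq_tmapD s' pushout_projE)).
apply: teq_cat; first by rewrite tmap_comp; apply: teq_refl.
rewrite tmap_comp (eq_tmap _ pushout_inl_phi) -tmap_comp.
have -> : tmap (pushout_inr \o snd) s' = tmap pushout_inr (tmap snd s').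
  by rewrite tmap_comp.
exact: teq_tmap.
Qed.

Lemma Ymexact_pushout_d : Ymexact Ycl pushout_d d2.
Proof. exact: Ymexact_through Yex_d1 pushout_d_inr pushout_dK. Qed.
End Pushout.

Section Main.
Variables (R : pzRingType) (Xcl : lmodType R -> Prop).
Variable Ycl : lmodType R^c -> Prop.
Local Notation GF := (GFlat Xcl Ycl).
Local Notation GF_coresolved := (has_Y_exact_coresolution Ycl GF).

Lemma GFlat_coresolution_step L :
  closed_under_extensions GF -> GF_coresolved L ->
  inhabited (ses_step Ycl Xcl GF_coresolved L).
Proof.
move=> ext [G [e [d [GG [e_inj [ex_e [ex_d [Yinj_e [Yex_e Yex_d]]]]]]]]].
have [C [dC [CX [C_ex [C_Yex [phi [phi_inj phi_im]]]]]]] := GG 0%N.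
have Yinj_phi := complete_resolution_Yminj C_ex C_Yex phi_inj phi_im.
constructor; apply: (@SesStep _ _ _ _ _ _ _ (phi \o e) (coker_proj (phi \o e))).
- exact: CX.
- apply: Yexact_ses_coker; first exact: inj_comp phi_inj e_inj.
  exact: Yminj_comp Yinj_e Yinj_phi.
apply: (coresolution_cons (j := coker_to_pushout phi ex_e)
  (rho := pushout_d phi (ex_d 0%N)) (d := fun n => d n.+2)).
- apply: (ext _ _ _ (pushout_inr (d 0%N) phi) (pushout_quot (d 0%N) phi)).
  + exact: pushout_inr_inj.
  + exact: pushout_quot_surj.
  + exact: mexact_pushout_inr_quot.
  + exact: GG.
  + exact: GFlat_coker.
- by move=> n; apply: GG.
- exact: coker_to_pushout_inj.
- exact: mexact_coker_to_pushout_d.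
- exact: mexact_pushout_d (ex_d 1%N).
- by move=> n; apply: ex_d.
- exact: Yminj_coker_to_pushout.
- exact: Ymexact_coker_to_pushout_d (Yex_d 0%N).
- exact: Ymexact_pushout_d (Yex_d 1%N).
- by move=> n; apply: Yex_d.
Qed.
End Main.

Theorem lemma2p2 (R : pzRingType) (Xcl : lmodType R -> Prop)
  (Ycl : lmodType R^c -> Prop) :
  closed_under_extensions (GFlat Xcl Ycl) ->
  forall M : lmodType R,
    has_Y_exact_coresolution Ycl Xcl M <->
    has_Y_exact_coresolution Ycl (GFlat Xcl Ycl) M.
Proof.
move=> ext M; split; first exact/coresolution_mono/GFlat_Xcl.
move=> M_GF; apply: coresolution_of_steps M_GF => L.
exact: GFlat_coresolution_step.
Qed.
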